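(* Let $P,PA$ be labelings and $c$ a command with $P;PA\vdash_{\mathtt{true}}c$, and let $\rho_1\sim_P\rho_2$, $\mu_1\sim_{PA}\mu_2$. If $\langle c,\rho_1,\mu_1\rangle\approx\langle c,\rho_2,\mu_2\rangle$, then $\langle c,\rho_1,\mu_1,\mathtt{false}\rangle\approx_i\langle c,\rho_2,\mu_2,\mathtt{false}\rangle$, i.e., for every directive list $D$ and observation lists $O_1,O_2$, if $\langle c,\rho_k,\mu_k,\mathtt{false}\rangle\xrightarrow[D]{O_k}{}_i^*$ some configuration for $k=1,2$ (ideal semantics w.r.t. $P$), then $O_1=O_2$.
   Context: Language AWhile: scalar variables $X\in\mathcal V$, arrays $a\in\mathcal A$; $e::=n\mid X\mid\mathrm{op}_{\mathbb N}(e,\dots,e)\mid be\,?\,e_1:e_2$; $be::=\mathtt{true}\mid\mathtt{false}\mid\mathrm{cmp}(e,e)\mid\mathrm{op}_{\mathbb B}(be,\dots,be)$; $c::=\mathtt{skip}\mid X:=e\mid c_1;c_2\mid\mathtt{if}\ be\ \mathtt{then}\ c_1\ \mathtt{else}\ c_2\mid\mathtt{while}\ be\ \mathtt{do}\ c\mid X\leftarrow a[e]\mid a[e]\leftarrow e'$. Scalar state $\rho:\mathcal V\to\mathbb N$; array state $\mu$ with sizes $|a|_\mu$ and values $\mu(a)[i]$; $[\![\cdot]\!]_\rho$ pure evaluation. Sequential semantics: steps $\langle c,\rho,\mu\rangle\xrightarrow{o}\langle c',\rho',\mu'\rangle$ with optional observation: $X:=e\to\mathtt{skip}$ updating $X$;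 $c_1;c_2\xrightarrow{o}c_1';c_2$ if $c_1\xrightarrow{o}c_1'$; $\mathtt{skip};c\to c$; conditional goes to branch $v=[\![be]\!]_\rho$ observing $\mathrm{branch}(v)$; $\mathtt{while}\ be\ \mathtt{do}\ c\to\mathtt{if}\ be\ \mathtt{then}\ (c;\mathtt{while}\ be\ \mathtt{do}\ c)\ \mathtt{else}\ \mathtt{skip}$; $X\leftarrow a[ie]$ with $i=[\![ie]\!]_\rho<|a|_\mu$ sets $X:=\mu(a)[i]$ observing $\mathrm{read}(a,i)$; $a[ie]\leftarrow e$ with $i<|a|_\mu$ sets $\mu[a[i]\mapsto[\![e]\!]_\rho]$ observing $\mathrm{write}(a,i)$. $\langle c_1,\rho_1,\mu_1\rangle\approx\langle c_2,\rho_2,\mu_2\rangle$ iff for all multi-step executions $\langle c_k,\rho_k,\mu_k\rangle\xrightarrow{O_k}{}^*$ (any prefix), one of $O_1,O_2$ is a prefix of the other. Labels: $\mathtt{true}$=public, $\mathtt{false}$=secret; $\ell_1\sqsubseteq\ell_2$ iff $\ell_2=\mathtt{true}\Rightarrow\ell_1=\mathtt{true}$; $\ell_1\sqcup\ell_2=\ell_1\wedge\ell_2$. $P(e),P(be)$ public iff all variables occurring are public. $\rho_1\sim_P\rho_2$ iff agreement on public scalar variables; $\mu_1\sim_{PA}\mu_2$ iff agreement on sizes and contents of public arrays. IFC typing $P;PA\vdash_{pc}c$: $\mathtt{skip}$; $X:=e$ if $pc\sqcup P(e)\sqsubseteq P(X)$; $c_1;c_2$ if both typed under $pc$; $\mathtt{if}$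 if both branches typed under $pc\sqcup P(be)$; $\mathtt{while}$ if body typed under $pc\sqcup P(be)$; $X\leftarrow a[i]$ if $pc\sqcup P(i)\sqcup PA(a)\sqsubseteq P(X)$; $a[i]\leftarrow e$ if $pc\sqcup P(i)\sqcup P(e)\sqsubseteq PA(a)$. Ideal semantics w.r.t. $P$: configurations $\langle c,\rho,\mu,\beta\rangle$; steps with optional observation and optional directive $d\in\{\mathit{step},\mathit{force},\mathrm{load}(a',j),\mathrm{store}(a',j)\}$. Non-observing rules as sequentially (flag kept, no directive). Conditional: $v=(P(be)\vee\neg\beta)\wedge[\![be]\!]_\rho$; $\mathit{step}$ goes to branch $v$; $\mathit{force}$ goes to branch $\neg v$ and sets $\beta:=\mathtt{true}$; obs $\mathrm{branch}(v)$. Read $X\leftarrow a[ie]$ with $\mathit{step}$: $i=0$ if $(P(ie)=\mathtt{false}\vee P(X)=\mathtt{true})\wedge\beta$, else $[\![ie]\!]_\rho$; requires $i<|a|_\mu$; $X:=\mu(a)[i]$; obs $\mathrm{read}(a,i)$. Read with $\mathrm{load}(a',j)$: requires $\beta=\mathtt{true}$, $P(ie)=\mathtt{true}$, $P(X)=\mathtt{false}$, $i=[\![ie]\!]_\rho\ge|a|_\mu$, $j<|a'|_\mu$; $X:=\mu(a')[j]$; obs $\mathrm{read}(a,i)$. Write $a[ie]\leftarrow ae$ with $\mathit{step}$: $i=0$ if $(P(ie)=\mathtt{false}\vee P(ae)=\mathtt{false})\wedge\beta$, else $[\![ie]\!]_\rho$; requires $i<|a|_\mu$; $\mu[a[i]\mapsto[\![ae]\!]_\rho]$;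 obs $\mathrm{write}(a,i)$. Write with $\mathrm{store}(a',j)$: requires $\beta=\mathtt{true}$, $P(ie)=P(ae)=\mathtt{true}$, $i\ge|a|_\mu$, $j<|a'|_\mu$; $\mu[a'[j]\mapsto[\![ae]\!]_\rho]$; obs $\mathrm{write}(a,i)$. Multi-step $\xrightarrow[D]{O}{}_i^*$ collects directives and observations. *)

From mathcomp Require Import all_boot.
Set Implicit Arguments.
Unset Strict Implicit.
Unset Printing Implicit Defensive.

Definition var := nat.
Definition arr := nat.

(* expressions: op_N and op_B are arbitrary n-ary operations, cmp an arbitrary
   binary comparison *)
Inductive aexp : Type :=
| ANum  (n : nat)
| AVar  (x : var)
| AOp   (f : seq nat -> nat) (es : seq aexp)
| ACond (b : bexp) (e1 e2 : aexp)
with bexp : Type :=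
| BTrue
| BFalse
| BCmp (f : nat -> nat -> bool) (e1 e2 : aexp)
| BOp  (f : seq bool -> bool) (bs : seq bexp).

Inductive com : Type :=
| Skip
| Assign (x : var) (e : aexp)
| Seq    (c1 c2 : com)
| If     (b : bexp) (c1 c2 : com)
| While  (b : bexp) (c : com)
| Read   (x : var) (a : arr) (ie : aexp)
| Write  (a : arr) (ie : aexp) (e : aexp).

Definition sstate := var -> nat.
Definition astate := arr -> seq nat.              (* mu: |a| = size (mu a), mu(a)[i] = nth 0 (mu a) i *)

Definition upd (rho : sstate) (x : var) (v : nat) : sstate :=
  fun y => if y == x then v else rho y.
Definition asize (mu : astate) (a : arr) : nat := size (mu a).
Definition aget (mu : astate) (a : arr) (i : nat) : nat := nth 0 (mu a) i.
Definition aupd (mu : astate) (a : arr) (i v : nat) : astate :=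
  fun b => if b == a then set_nth 0 (mu a) i v else mu b.

Fixpoint aeval (rho : sstate) (e : aexp) : nat :=
  match e with
  | ANum n => n
  | AVar x => rho x
  | AOp f es => f (map (aeval rho) es)
  | ACond b e1 e2 => if beval rho b then aeval rho e1 else aeval rho e2
  end
with beval (rho : sstate) (b : bexp) : bool :=
  match b with
  | BTrue => true
  | BFalse => false
  | BCmp f e1 e2 => f (aeval rho e1) (aeval rho e2)
  | BOp f bs => f (map (beval rho) bs)
  end.

(* labels: true = public, false = secret *)
Definition label := bool.
Definition lflow (l1 l2 : label) : Prop := l2 = true -> l1 = true.
Definition ljoin (l1 l2 : label) : label := l1 && l2.

Fixpoint alab (P : var -> label) (e : aexp) : label :=
  match e with
  | ANum _ => true
  | AVar x => P x
  | AOp _ es => all (alab P) es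
  | ACond b e1 e2 => [&& blab P b, alab P e1 & alab P e2]
  end
with blab (P : var -> label) (b : bexp) : label :=
  match b with
  | BTrue => true
  | BFalse => true
  | BCmp _ e1 e2 => alab P e1 && alab P e2
  | BOp _ bs => all (blab P) bs
  end.

Definition sagree (P : var -> label) (rho1 rho2 : sstate) : Prop :=
  forall x, P x = true -> rho1 x = rho2 x.
(* agreement on sizes and contents of public arrays *)
Definition aagree (PA : arr -> label) (mu1 mu2 : astate) : Prop :=
  forall a, PA a = true -> mu1 a = mu2 a.

Inductive obs : Type :=
| OBranch (v : bool)
| ORead   (a : arr) (i : nat)
| OWrite  (a : arr) (i : nat).

Inductive dir : Type :=
| DStep
| DForce
| DLoad  (a : arr) (j : nat)
| DStore (a : arr) (j : nat).

Definition ocons {T} (o : option T) (l : seq T) : seq T :=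
  match o with Some x => x :: l | None => l end.

Inductive sstep : com -> sstate -> astate -> option obs -> com -> sstate -> astate -> Prop :=
| SAssign x e rho mu :
    sstep (Assign x e) rho mu None Skip (upd rho x (aeval rho e)) mu
| SSeq c1 c1' c2 rho mu o rho' mu' :
    sstep c1 rho mu o c1' rho' mu' ->
    sstep (Seq c1 c2) rho mu o (Seq c1' c2) rho' mu'
| SSeqSkip c rho mu :
    sstep (Seq Skip c) rho mu None c rho mu
| SIf b c1 c2 rho mu :
    let v := beval rho b in
    sstep (If b c1 c2) rho mu (Some (OBranch v)) (if v then c1 else c2) rho mu
| SWhile b c rho mu :
    sstep (While b c) rho mu None (If b (Seq c (While b c)) Skip) rho mu
| SRead x a ie rho mu :
    let i := aeval rho ie in
    i < asize mu a ->
    sstep (Read x a ie) rho mu (Some (ORead a i)) Skip (upd rho x (aget mu a i)) mu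
| SWrite a ie e rho mu :
    let i := aeval rho ie in
    i < asize mu a ->
    sstep (Write a ie e) rho mu (Some (OWrite a i)) Skip rho (aupd mu a i (aeval rho e)).

Inductive smulti : com -> sstate -> astate -> seq obs -> com -> sstate -> astate -> Prop :=
| SMRefl c rho mu : smulti c rho mu [::] c rho mu
| SMStep c rho mu o c' rho' mu' O c'' rho'' mu'' :
    sstep c rho mu o c' rho' mu' ->
    smulti c' rho' mu' O c'' rho'' mu'' ->
    smulti c rho mu (ocons o O) c'' rho'' mu''.

Definition prefix {T} (l1 l2 : seq T) : Prop := exists l, l2 = l1 ++ l.

Definition sequiv (c1 : com) (rho1 : sstate) (mu1 : astate)
                  (c2 : com) (rho2 : sstate) (mu2 : astate) : Prop :=
  forall O1 c1' rho1' mu1' O2 c2' rho2' mu2',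
    smulti c1 rho1 mu1 O1 c1' rho1' mu1' ->
    smulti c2 rho2 mu2 O2 c2' rho2' mu2' ->
    prefix O1 O2 \/ prefix O2 O1.

Inductive typed (P : var -> label) (PA : arr -> label) : label -> com -> Prop :=
| TSkip pc : typed P PA pc Skip
| TAssign pc x e :
    lflow (ljoin pc (alab P e)) (P x) -> typed P PA pc (Assign x e)
| TSeq pc c1 c2 :
    typed P PA pc c1 -> typed P PA pc c2 -> typed P PA pc (Seq c1 c2)
| TIf pc b c1 c2 :
    typed P PA (ljoin pc (blab P b)) c1 -> typed P PA (ljoin pc (blab P b)) c2 ->
    typed P PA pc (If b c1 c2)
| TWhile pc b c :
    typed P PA (ljoin pc (blab P b)) c -> typed P PA pc (While b c)
| TRead pc x a ie :
    lflow (ljoin (ljoin pc (alab P ie)) (PA a)) (P x) -> typed P PA pc (Read x a ie)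
| TWrite pc a ie e :
    lflow (ljoin (ljoin pc (alab P ie)) (alab P e)) (PA a) -> typed P PA pc (Write a ie e).

Inductive istep (P : var -> label) :
  com -> sstate -> astate -> bool -> option obs -> option dir ->
  com -> sstate -> astate -> bool -> Prop :=
| IAssign x e rho mu beta :
    istep P (Assign x e) rho mu beta None None Skip (upd rho x (aeval rho e)) mu beta
| ISeq c1 c1' c2 rho mu beta o d rho' mu' beta' :
    istep P c1 rho mu beta o d c1' rho' mu' beta' ->
    istep P (Seq c1 c2) rho mu beta o d (Seq c1' c2) rho' mu' beta'
| ISeqSkip c rho mu beta :
    istep P (Seq Skip c) rho mu beta None None c rho mu beta
| IWhile b c rho mu beta :
    istep P (While b c) rho mu beta None None (If b (Seq c (While b c)) Skip) rho mu beta
| IIfStep b c1 c2 rho mu beta :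
    let v := (blab P b || ~~ beta) && beval rho b in
    istep P (If b c1 c2) rho mu beta (Some (OBranch v)) (Some DStep)
          (if v then c1 else c2) rho mu beta
| IIfForce b c1 c2 rho mu beta :
    let v := (blab P b || ~~ beta) && beval rho b in
    istep P (If b c1 c2) rho mu beta (Some (OBranch v)) (Some DForce)
          (if ~~ v then c1 else c2) rho mu true
| IReadStep x a ie rho mu beta :
    let i := if (~~ alab P ie || P x) && beta then 0 else aeval rho ie in
    i < asize mu a ->
    istep P (Read x a ie) rho mu beta (Some (ORead a i)) (Some DStep)
          Skip (upd rho x (aget mu a i)) mu beta
| IReadLoad x a ie rho mu beta a' j :
    let i := aeval rho ie in
    beta = true -> alab P ie = true -> P x = false ->
    asize mu a <= i -> j < asize mu a' ->
    istep P (Read x a ie) rho mu beta (Some (ORead a i)) (Some (DLoad a' j))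
          Skip (upd rho x (aget mu a' j)) mu beta
| IWriteStep a ie e rho mu beta :
    let i := if (~~ alab P ie || ~~ alab P e) && beta then 0 else aeval rho ie in
    i < asize mu a ->
    istep P (Write a ie e) rho mu beta (Some (OWrite a i)) (Some DStep)
          Skip rho (aupd mu a i (aeval rho e)) beta
| IWriteStore a ie e rho mu beta a' j :
    let i := aeval rho ie in
    beta = true -> alab P ie = true -> alab P e = true ->
    asize mu a <= i -> j < asize mu a' ->
    istep P (Write a ie e) rho mu beta (Some (OWrite a i)) (Some (DStore a' j))
          Skip rho (aupd mu a' j (aeval rho e)) beta.

Inductive imulti (P : var -> label) :
  com -> sstate -> astate -> bool -> seq dir -> seq obs ->
  com -> sstate -> astate -> bool -> Prop :=
| IMRefl c rho mu beta : imulti P c rho mu beta [::] [::] c rho mu beta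
| IMStep c rho mu beta o d c' rho' mu' beta' D O c'' rho'' mu'' beta'' :
    istep P c rho mu beta o d c' rho' mu' beta' ->
    imulti P c' rho' mu' beta' D O c'' rho'' mu'' beta'' ->
    imulti P c rho mu beta (ocons d D) (ocons o O) c'' rho'' mu'' beta''.

Definition iequiv (P : var -> label) (c1 : com) (rho1 : sstate) (mu1 : astate) (b1 : bool)
                  (c2 : com) (rho2 : sstate) (mu2 : astate) (b2 : bool) : Prop :=
  forall D O1 c1' rho1' mu1' b1' O2 c2' rho2' mu2' b2',
    imulti P c1 rho1 mu1 b1 D O1 c1' rho1' mu1' b1' ->
    imulti P c2 rho2 mu2 b2 D O2 c2' rho2' mu2' b2' ->
    O1 = O2.

From mathcomp Require Import all_boot.
Set Implicit Arguments.
Unset Strict Implicit.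
Unset Printing Implicit Defensive.

(* Run the two ideal executions in lockstep under the same directives.  Before
   speculation starts, an ideal step is a sequential step, so sequential
   equivalence forces equal observations and is inherited by the successor
   configurations.  Once speculating, the ideal semantics masks every secret
   branch condition and secret array index, so observations depend on public
   data only.  In both modes the pc-free part of the typing (public variables
   and arrays only receive public data) keeps the two states in agreement on
   public data, hence the observations coincide. *)

Section Agreement.
Variables (P : var -> label) (rho1 rho2 : sstate).
Hypothesis Hrho : sagree P rho1 rho2.

Fixpoint aeval_sagree (e : aexp) : alab P e -> aeval rho1 e = aeval rho2 e
with beval_sagree (b : bexp) : blab P b -> beval rho1 b = beval rho2 b.
Proof.
- case: e => [n|x|f es|b e1 e2] /=; [done|exact: Hrho| |].
  + by move=> Hes; congr f; elim: es Hes => //= e es IH /andP[/aeval_sagree-> /IH->].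
  + by case/and3P=> /beval_sagree-> He1 He2; case: ifP; rewrite aeval_sagree.
- case: b => [| |f e1 e2|f bs] //=.
  + by case/andP=> /aeval_sagree-> /aeval_sagree->.
  + by move=> Hbs; congr f; elim: bs Hbs => //= b bs IH /andP[/beval_sagree-> /IH->].
Qed.
End Agreement.

Lemma sagree_upd P rho1 rho2 x v1 v2 :
  sagree P rho1 rho2 -> (P x -> v1 = v2) -> sagree P (upd rho1 x v1) (upd rho2 x v2).
Proof.
move=> Hrho Hv y Hy; rewrite /upd.
by case: eqP => [Eyx|_]; [rewrite Hv -?Eyx | exact: Hrho].
Qed.

Lemma aagree_aupd PA mu1 mu2 a i v1 v2 :
  aagree PA mu1 mu2 -> (PA a -> v1 = v2) -> aagree PA (aupd mu1 a i v1) (aupd mu2 a i v2).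
Proof.
move=> Hmu Hv b Hb; rewrite /aupd.
by case: eqP => [Eba|_]; [rewrite Hv -Eba ?Hmu | exact: Hmu].
Qed.

Lemma no_istep_Skip P rho mu beta o d c' rho' mu' beta' :
  ~ istep P Skip rho mu beta o d c' rho' mu' beta'.
Proof. by move=> H; inversion H. Qed.

Fixpoint silent (c : com) : bool :=
  match c with
  | Assign _ _ | While _ _ => true
  | Seq c1 _ => if c1 is Skip then true else silent c1
  | _ => false
  end.

Lemma istep_silent P c rho mu beta o d c' rho' mu' beta' :
  istep P c rho mu beta o d c' rho' mu' beta' ->
  isSome o = ~~ silent c /\ isSome d = ~~ silent c.
Proof.
elim=> //= c1 c1' c2 {}rho {}mu {}beta {}o {}d {}rho' {}mu' {}beta'.
by case: c1 => // /no_istep_Skip.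
Qed.

Lemma imulti_nil_obs P c rho mu beta O c' rho' mu' beta' :
  imulti P c rho mu beta [::] O c' rho' mu' beta' -> O = [::].
Proof.
move ED: [::] => D R; elim: R ED => //.
move=> {}c {}rho {}mu {}beta o [d|] c1 rho1 mu1 beta1 D1 O1 c2 rho2 mu2 beta2 s _ IH //= ED.
by have [] := istep_silent s; case: o {s} => [o|] <- // _; apply: IH.
Qed.

Lemma istep_beta_false P c rho mu beta o d c' rho' mu' beta' :
  istep P c rho mu beta o d c' rho' mu' beta' -> beta' = false -> beta = false.
Proof. by elim. Qed.

Lemma istep_nonspec_sstep P c rho mu o d c' rho' mu' beta' :
  istep P c rho mu false o d c' rho' mu' beta' ->
  exists c'' rho'' mu'', sstep c rho mu o c'' rho'' mu'' /\
    (beta' = false -> [/\ c'' = c', rho'' = rho' & mu'' = mu']).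
Proof.
move Ebeta: false => beta s; elim: s Ebeta => {c rho mu beta o d c' rho' mu' beta'}.
- by move=> *; do 3 eexists; split; [constructor|].
- move=> c1 c1' c2 rho mu beta o d rho' mu' beta' _ IH /IH[c'' [rho'' [mu'' [s1 E]]]].
  exists (Seq c'' c2), rho'', mu''; split; first exact: SSeq.
  by move=> /E[-> -> ->].
- by move=> *; do 3 eexists; split; [constructor|].
- by move=> *; do 3 eexists; split; [constructor|].
- move=> b c1 c2 rho mu beta v Eb; rewrite /v -Eb orbT.
  by do 3 eexists; split; [constructor|].
- move=> b c1 c2 rho mu beta v Eb; rewrite /v -Eb orbT.
  by do 3 eexists; split; [constructor|].
- move=> x a ie rho mu beta i + Eb; rewrite /i -Eb andbF => Hi.
  by do 3 eexists; split; [constructor|].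
- by move=> *; subst.
- move=> a ie e rho mu beta i + Eb; rewrite /i -Eb andbF => Hi.
  by do 3 eexists; split; [constructor|].
- by move=> *; subst.
Qed.

Lemma sequiv_sstep c rho1 mu1 rho2 mu2 o c' rho1' mu1' rho2' mu2' :
  sequiv c rho1 mu1 c rho2 mu2 ->
  sstep c rho1 mu1 o c' rho1' mu1' -> sstep c rho2 mu2 o c' rho2' mu2' ->
  sequiv c' rho1' mu1' c' rho2' mu2'.
Proof.
move=> Hc s1 s2 O1 c1 rho1'' mu1'' O2 c2 rho2'' mu2'' R1 R2.
have [[l E]|[l E]] := Hc _ _ _ _ _ _ _ _ (SMStep s1 R1) (SMStep s2 R2); [left|right];
  by exists l; case: o {s1 s2} E => [o [E]|].
Qed.

Lemma sequiv_sstep_obs c rho1 mu1 rho2 mu2 o1 o2 c1 rho1' mu1' c2 rho2' mu2' :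
  sequiv c rho1 mu1 c rho2 mu2 ->
  sstep c rho1 mu1 o1 c1 rho1' mu1' -> sstep c rho2 mu2 o2 c2 rho2' mu2' ->
  isSome o1 = isSome o2 -> o1 = o2.
Proof.
move=> Hc s1 s2.
have := Hc _ _ _ _ _ _ _ _ (SMStep s1 (SMRefl _ _ _)) (SMStep s2 (SMRefl _ _ _)).
by case: o1 o2 {s1 s2} => [o1|] [o2|] // [[l [->]] | [l [->]]].
Qed.

Lemma istep_nonspec_obs P c rho1 mu1 rho2 mu2 o1 o2 d1 d2
    c1 rho1' mu1' beta1 c2 rho2' mu2' beta2 :
  sequiv c rho1 mu1 c rho2 mu2 ->
  istep P c rho1 mu1 false o1 d1 c1 rho1' mu1' beta1 ->
  istep P c rho2 mu2 false o2 d2 c2 rho2' mu2' beta2 -> o1 = o2.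
Proof.
move=> Hc s1 s2.
have [c1'' [rho1'' [mu1'' [t1 _]]]] := istep_nonspec_sstep s1.
have [c2'' [rho2'' [mu2'' [t2 _]]]] := istep_nonspec_sstep s2.
by apply: (sequiv_sstep_obs Hc t1 t2); rewrite (istep_silent s1).1 (istep_silent s2).1.
Qed.

Lemma istep_nonspec_sequiv P c rho1 mu1 rho2 mu2 o d1 d2 c' rho1' mu1' rho2' mu2' :
  sequiv c rho1 mu1 c rho2 mu2 ->
  istep P c rho1 mu1 false o d1 c' rho1' mu1' false ->
  istep P c rho2 mu2 false o d2 c' rho2' mu2' false ->
  sequiv c' rho1' mu1' c' rho2' mu2'.
Proof.
move=> Hc s1 s2.
have [? [? [? [t1 /(_ erefl)[Ec1 Erho1 Emu1]]]]] := istep_nonspec_sstep s1.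
have [? [? [? [t2 /(_ erefl)[Ec2 Erho2 Emu2]]]]] := istep_nonspec_sstep s2.
rewrite Ec1 Erho1 Emu1 in t1; rewrite Ec2 Erho2 Emu2 in t2.
exact: (sequiv_sstep Hc t1 t2).
Qed.

Lemma imulti_inv P c rho mu beta D O c'' rho'' mu'' beta'' :
  imulti P c rho mu beta D O c'' rho'' mu'' beta'' ->
  D = [::] /\ O = [::] \/
  exists o d c' rho' mu' beta' D' O',
    [/\ istep P c rho mu beta o d c' rho' mu' beta',
        imulti P c' rho' mu' beta' D' O' c'' rho'' mu'' beta'',
        D = ocons d D' & O = ocons o O'].
Proof. case; first by left. by move=> *; right; do 8 eexists; split; eauto. Qed.

Lemma ocons_inj T (x1 x2 : option T) l1 l2 :
  isSome x1 = isSome x2 -> ocons x1 l1 = ocons x2 l2 -> x1 = x2 /\ l1 = l2.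
Proof. by case: x1 x2 => [x1|] [x2|] //= _ [-> ->]. Qed.

Section ExplicitFlows.
Variables (P : var -> label) (PA : arr -> label).

Fixpoint explicit_secure (c : com) : Prop :=
  match c with
  | Skip => True
  | Assign x e => P x -> alab P e
  | Seq c1 c2 | If _ c1 c2 => explicit_secure c1 /\ explicit_secure c2
  | While _ c => explicit_secure c
  | Read x a ie => P x -> alab P ie /\ PA a
  | Write a ie e => PA a -> alab P ie /\ alab P e
  end.

Lemma typed_explicit_secure pc c : typed P PA pc c -> explicit_secure c.
Proof.
elim=> {pc c} /=; try tauto.
- by move=> pc x e H /H /andP[].
- by move=> pc x a ie H /H /andP[/andP[_ ->] ->].
- by move=> pc a ie e H /H /andP[/andP[_ ->] ->].
Qed.

Lemma istep_explicit_secure c rho mu beta o d c' rho' mu' beta' :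
  istep P c rho mu beta o d c' rho' mu' beta' ->
  explicit_secure c -> explicit_secure c'.
Proof.
elim=> {c rho mu beta o d c' rho' mu' beta'}; try by move=> /=; tauto.
all: by move=> b c1 c2 rho mu beta v [? ?]; case: ifP.
Qed.

(* While speculating, secret guards and indices are masked; otherwise the
   premise is supplied by sequential equivalence. *)
Lemma guarded_branch_eq rho1 rho2 b beta :
  sagree P rho1 rho2 ->
  let guard rho := (blab P b || ~~ beta) && beval rho b in
  (beta = false -> guard rho1 = guard rho2) -> guard rho1 = guard rho2.
Proof.
move=> Hrho guard; case: beta @guard => [guard _ | guard /(_ erefl) //].
rewrite {}/guard !orbF.
by case Hb: (blab P b); rewrite //= (beval_sagree Hrho Hb).
Qed.

Lemma guarded_index_eq rho1 rho2 ie (q : bool) beta :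
  sagree P rho1 rho2 ->
  let index rho := if (~~ alab P ie || q) && beta then 0 else aeval rho ie in
  (beta = false -> index rho1 = index rho2) -> index rho1 = index rho2.
Proof.
move=> Hrho index; case: beta @index => [index _ | index /(_ erefl) //].
rewrite {}/index andbT.
by case Hie: (alab P ie); case: q; rewrite //= (aeval_sagree Hrho Hie).
Qed.

Lemma istep_lockstep c rho1 mu1 beta o1 d c1 rho1' mu1' beta1
                       rho2 mu2 o2 c2 rho2' mu2' beta2 :
  explicit_secure c -> sagree P rho1 rho2 -> aagree PA mu1 mu2 ->
  istep P c rho1 mu1 beta o1 d c1 rho1' mu1' beta1 ->
  istep P c rho2 mu2 beta o2 d c2 rho2' mu2' beta2 ->
  (beta = false -> o1 = o2) ->
  [/\ o1 = o2, c1 = c2, beta1 = beta2, sagree P rho1' rho2' & aagree PA mu1' mu2'].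
Proof.
move=> Hc Hrho Hmu s1; elim: s1 rho2 mu2 o2 c2 rho2' mu2' beta2 Hc Hrho Hmu
  => {c rho1 mu1 beta o1 d c1 rho1' mu1' beta1}.
- move=> x e rho1 mu1 beta rho2 mu2 o2 c2 rho2' mu2' beta2 /= Hc Hrho Hmu s2 _.
  inversion s2; subst; split=> //.
  by apply: sagree_upd (Hrho) _ => /Hc; apply: aeval_sagree.
- move=> c1 c1' c2 rho1 mu1 beta o1 d rho1' mu1' beta1 s1 IH
         rho2 mu2 o2 c2' rho2' mu2' beta2 [Hc1 _] Hrho Hmu s2 Ho.
  inversion s2 as [|? c1'' ? ? ? ? ? ? ? ? ? s12|? ? ? ?| | | | | | |]; subst.
  + by have [-> -> -> ? ?] := IH _ _ _ _ _ _ _ Hc1 Hrho Hmu s12 Ho.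
  + by case: (no_istep_Skip s1).
- move=> c rho1 mu1 beta rho2 mu2 o2 c2 rho2' mu2' beta2 _ Hrho Hmu s2 _.
  inversion s2 as [|? ? ? ? ? ? ? ? ? ? ? sSkip|? ? ? ?| | | | | | |]; subst.
  + by case: (no_istep_Skip sSkip).
  + by split.
- move=> b c rho1 mu1 beta rho2 mu2 o2 c2 rho2' mu2' beta2 _ Hrho Hmu s2 _.
  by inversion s2; subst; split.
- move=> b c1 c2 rho1 mu1 beta v rho2 mu2 o2 c2' rho2' mu2' beta2 _ Hrho Hmu s2 Ho.
  inversion s2 as [| | | |? ? ? ? ? ? v2| | | | |]; subst.
  have Ev : v = v2 by apply: guarded_branch_eq Hrho _ => /Ho[].
  by rewrite Ev; split.
- move=> b c1 c2 rho1 mu1 beta v rho2 mu2 o2 c2' rho2' mu2' beta2 _ Hrho Hmu s2 Ho.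
  inversion s2 as [| | | | |? ? ? ? ? ? v2| | | |]; subst.
  have Ev : v = v2 by apply: guarded_branch_eq Hrho _ => /Ho[].
  by rewrite Ev; split.
- move=> x a ie rho1 mu1 beta i _ rho2 mu2 o2 c2 rho2' mu2' beta2 /= Hc Hrho Hmu s2 Ho.
  inversion s2 as [| | | | | |? ? ? ? ? ? i2| | |]; subst.
  have Ei : i = i2 by apply: guarded_index_eq Hrho _ => /Ho[].
  rewrite -Ei; split=> //; apply: sagree_upd (Hrho) _.
  by move=> /Hc[_ /Hmu]; rewrite /aget => ->.
- move=> x a ie rho1 mu1 beta a' j i _ Hie Hx _ _
         rho2 mu2 o2 c2 rho2' mu2' beta2 _ Hrho Hmu s2 _.
  inversion s2 as [| | | | | | |? ? ? ? ? ? ? ? i2| |]; subst.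
  have Ei : i = i2 by apply: aeval_sagree Hrho _ Hie.
  rewrite -Ei; split=> //; apply: sagree_upd (Hrho) _.
  by rewrite Hx.
- move=> a ie e rho1 mu1 beta i _ rho2 mu2 o2 c2 rho2' mu2' beta2 /= Hc Hrho Hmu s2 Ho.
  inversion s2 as [| | | | | | | |? ? ? ? ? ? i2|]; subst.
  have Ei : i = i2 by apply: guarded_index_eq Hrho _ => /Ho[].
  rewrite -Ei; split=> //; apply: aagree_aupd (Hmu) _.
  by move=> /Hc[_]; apply: aeval_sagree.
- move=> a ie e rho1 mu1 beta a' j i _ Hie He _ _
         rho2 mu2 o2 c2 rho2' mu2' beta2 _ Hrho Hmu s2 _.
  inversion s2 as [| | | | | | | | |? ? ? ? ? ? ? ? i2]; subst.
  have Ei : i = i2 by apply: aeval_sagree Hrho _ Hie.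
  rewrite -Ei; split=> //; apply: aagree_aupd (Hmu) _.
  by move=> _; apply: aeval_sagree Hrho _ He.
Qed.

Lemma imulti_lockstep c rho1 mu1 beta D O1 c1 rho1' mu1' beta1 :
  imulti P c rho1 mu1 beta D O1 c1 rho1' mu1' beta1 ->
  forall rho2 mu2 O2 c2 rho2' mu2' beta2,
  imulti P c rho2 mu2 beta D O2 c2 rho2' mu2' beta2 ->
  explicit_secure c -> sagree P rho1 rho2 -> aagree PA mu1 mu2 ->
  (beta = false -> sequiv c rho1 mu1 c rho2 mu2) -> O1 = O2.
Proof.
elim=> {c rho1 mu1 beta D O1 c1 rho1' mu1' beta1}.
  by move=> c rho mu beta rho2 mu2 O2 c2 rho2' mu2' beta2 /imulti_nil_obs.
move=> c rho1 mu1 beta o1 d c' rho1' mu1' beta' D O1 c1 rho1'' mu1'' beta1 s1 R1 IH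
       rho2 mu2 O2 c2 rho2'' mu2'' beta2 R2 Hc Hrho Hmu Hseq.
have [[ED ->]|[o2 [d2 [c2' [rho2' [mu2' [beta2' [D2 [O2' [s2 R2' ED ->]]]]]]]]]] :=
  imulti_inv R2.
  have [So Sd] := istep_silent s1.
  case: d s1 ED Sd {R2} => // s1 /= ED; subst D; rewrite (imulti_nil_obs R1).
  by case: o1 {s1} So => // a <-.
have Sd : isSome d = isSome d2 by rewrite (istep_silent s1).2 (istep_silent s2).2.
have [Ed ED2] := ocons_inj Sd ED; subst d2 D2.
have Ho : beta = false -> o1 = o2.
  by move=> Eb; subst beta; apply: (istep_nonspec_obs (Hseq erefl) s1 s2).
have [Eo Ec Eb Hrho' Hmu'] := istep_lockstep Hc Hrho Hmu s1 s2 Ho.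
subst o2 c2' beta2'.
congr ocons; apply: (IH _ _ _ _ _ _ _ R2' (istep_explicit_secure s1 Hc) Hrho' Hmu').
move=> Eb'; have Eb := istep_beta_false s1 Eb'; subst beta beta'.
exact: (istep_nonspec_sequiv (Hseq erefl) s1 s2).
Qed.
End ExplicitFlows.

Theorem lemma5p4 (P : var -> label) (PA : arr -> label) (c : com)
    (rho1 rho2 : sstate) (mu1 mu2 : astate) :
  typed P PA true c ->
  sagree P rho1 rho2 ->
  aagree PA mu1 mu2 ->
  sequiv c rho1 mu1 c rho2 mu2 ->
  forall (D : seq dir) (O1 O2 : seq obs)
         (c1' c2' : com) (rho1' rho2' : sstate) (mu1' mu2' : astate) (b1 b2 : bool),
    imulti P c rho1 mu1 false D O1 c1' rho1' mu1' b1 ->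
    imulti P c rho2 mu2 false D O2 c2' rho2' mu2' b2 ->
    O1 = O2.
Proof.
move=> Hc Hrho Hmu Hseq D O1 O2 c1' c2' rho1' rho2' mu1' mu2' b1 b2 R1 R2.
exact: (imulti_lockstep R1 R2 (typed_explicit_secure Hc) Hrho Hmu (fun _ => Hseq)).
Qed.
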